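(* Let $n\ge 3$ (even or odd), $k\ge 3$ and $m\ge 2$ be integers. Then the strong metric dimension of $(C_n\square P_k)\square P_m$ is $2n$.
   Context: All graphs are finite and connected; $d(u,v)$ is the shortest-path distance. $C_n$ is the cycle on $n$ vertices and $P_k$ the path on $k$ vertices. The cartesian product $G\square H$ has vertex set $V(G)\times V(H)$, with $(g_1,h_1)$ adjacent to $(g_2,h_2)$ iff either $h_1=h_2$ and $g_1g_2\in E(G)$, or $g_1=g_2$ and $h_1h_2\in E(H)$. A set $Q\subseteq V(G)$ is a strong resolving set of $G$ if for any two distinct vertices $p,q$ of $G$ there is $s\in Q$ such that $p$ lies on some shortest $q$–$s$ path or $q$ lies on some shortest $p$–$s$ path. The strong metric dimension $\mathrm{sdim}(G)$ is the minimum size of a strong resolving set of $G$. *)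

From mathcomp Require Import all_boot.
Set Implicit Arguments. Unset Strict Implicit. Unset Printing Implicit Defensive.

(* A graph is given by a vertex finType T and a (symmetric, irreflexive) edge relation e. *)

Definition cycle_rel (n : nat) : rel 'I_n :=
  fun i j => (val j == (val i).+1 %% n) || (val i == (val j).+1 %% n).

Definition path_rel (k : nat) : rel 'I_k :=
  fun i j => ((val i).+1 == val j) || ((val j).+1 == val i).

Definition cart_rel (A B : finType) (eA : rel A) (eB : rel B) : rel (A * B) :=
  fun x y => ((x.2 == y.2) && eA x.1 y.1) || ((x.1 == y.1) && eB x.2 y.2).

Definition walk (T : finType) (e : rel T) (u v : T) (w : seq T) : Prop :=
  path e u w /\ last u w = v.

Definition on_shortest_path (T : finType) (e : rel T) (u v p : T) : Prop :=
  exists w, [/\ walk e u v w, p \in u :: w &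
                forall w', walk e u v w' -> size w <= size w'].

Definition strong_resolving (T : finType) (e : rel T) (Q : {set T}) : Prop :=
  forall p q : T, p != q ->
    exists2 s, s \in Q & on_shortest_path e q s p \/ on_shortest_path e p s q.

Definition is_sdim (T : finType) (e : rel T) (d : nat) : Prop :=
  (exists Q : {set T}, strong_resolving e Q /\ #|Q| = d) /\
  (forall Q : {set T}, strong_resolving e Q -> d <= #|Q|).

From mathcomp Require Import all_boot zify.
Set Implicit Arguments. Unset Strict Implicit. Unset Printing Implicit Defensive.

(* The distance of C_n □ P_k □ P_m is the sum of the distances of the factors,
   and q lies on a shortest p–s path iff d(p,s) = d(p,q) + d(q,s).  The 2n
   vertices (a,0,0) and (a,0,m-1) resolve strongly: if q is not above p in the
   P_k coordinate, q lies on a shortest path from p to whichever of (q_1,0,0),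
   (q_1,0,m-1) is on the far side of q in P_m.  Conversely, (a,0,0) and
   (a+n/2,k-1,m-1), as well as (a,0,m-1) and (a+n/2,k-1,0), realise the
   diameter, so each such pair is mutually maximally distant and meets every
   strong resolving set; these 2n pairs are disjoint. *)

Section Walks.
Variables (T : finType) (e : rel T).

Lemma walk_cat x y z w1 w2 :
  walk e x y w1 -> walk e y z w2 -> walk e x z (w1 ++ w2).
Proof. by case=> p1 l1 [p2 l2]; split; rewrite ?cat_path ?last_cat l1 ?p1. Qed.

Lemma walk_sym x y w :
  symmetric e -> walk e x y w -> exists2 w', walk e y x w' & size w' = size w.
Proof.
move=> e_sym [pw <-]; exists (rev (belast x w)); last by rewrite size_rev size_belast.
split; first by rewrite rev_path (eq_path (e' := e)).
by case: w {pw} => [|z w] //=; rewrite rev_cons last_rcons.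
Qed.

End Walks.

Definition graph_dist (T : finType) (e : rel T) (d : T -> T -> nat) : Prop :=
  [/\ forall x, d x x = 0,
      forall x y z, e y z -> d x z <= d x y + 1 &
      forall x y, exists2 w, walk e x y w & size w = d x y].

Section GraphDist.
Variables (T : finType) (e : rel T) (d : T -> T -> nat).
Hypothesis d_graph : graph_dist e d.

Lemma dist_last_le x y w : path e y w -> d x (last y w) <= d x y + size w.
Proof.
case: d_graph => _ d_step _; elim: w y => [|z w IHw] y /=; first by rewrite addn0.
by case/andP=> /(d_step x) d_yz /IHw; lia.
Qed.

Lemma dist_walk_le x y w : walk e x y w -> d x y <= size w.
Proof. by case: d_graph => d0 _ _ [/(dist_last_le x) + <-]; rewrite d0. Qed.

Lemma dist_triangle x y z : d x z <= d x y + d y z.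
Proof.
case: d_graph => _ _ d_walk.
have [w1 W1 <-] := d_walk x y; have [w2 W2 <-] := d_walk y z.
by rewrite -size_cat; apply: dist_walk_le (walk_cat W1 W2).
Qed.

Lemma dist_eq0 x y : d x y = 0 -> x = y.
Proof.
case: d_graph => _ _ d_walk dxy; have [w [_ lw]] := d_walk x y.
by rewrite dxy -lw => /size0nil ->.
Qed.

Lemma on_shortest_pathP q s p :
  on_shortest_path e q s p <-> d q s = d q p + d p s.
Proof.
case: d_graph => d0 _ d_walk; split.
- case=> w [[pw lw] p_in w_min]; apply/eqP; rewrite eqn_leq dist_triangle.
  have [w' W' <-] := d_walk q s; apply: leq_trans (w_min _ W').
  move: p_in pw lw {w_min}; case/splitPl => w1 w2 l1.
  rewrite cat_path last_cat size_cat l1 => /andP[p1 p2] l2.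
  have := dist_last_le q p1; have := dist_last_le p p2.
  by rewrite l1 l2 !d0; lia.
- move=> d_qs; have [w1 W1 s1] := d_walk q p; have [w2 W2 s2] := d_walk p s.
  exists (w1 ++ w2); split; first exact: walk_cat W1 W2.
  + by case: W1 => _ <-; rewrite -cat_cons mem_cat mem_last.
  + by move=> w' /dist_walk_le; rewrite size_cat s1 s2 -d_qs.
Qed.

Lemma mutually_maximal_in_strong_resolving Q u v :
  strong_resolving e Q -> u != v ->
  (forall s, d u s <= d u v) -> (forall s, d v s <= d v u) ->
  (u \in Q) || (v \in Q).
Proof.
move=> Q_res uv u_max v_max; have [s sQ] := Q_res u v uv.
case=> /on_shortest_pathP d_s.
- have /dist_eq0 -> : d u s = 0 by have := v_max s; lia.
  by rewrite sQ.
- have /dist_eq0 -> : d v s = 0 by have := u_max s; lia.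
  by rewrite sQ orbT.
Qed.

End GraphDist.

Lemma leq_card_pairs (I T : finType) (u v : I -> T) (Q : {set T}) :
  injective u -> injective v -> (forall i j, u i != v j) ->
  (forall i, (u i \in Q) || (v i \in Q)) -> #|I| <= #|Q|.
Proof.
move=> u_inj v_inj uv Q_meets; pose f i := if u i \in Q then u i else v i.
have f_inj : injective f.
  move=> i j; rewrite /f; case: ifP => _; case: ifP => _ fij;
    [exact: u_inj | by case/eqP: (uv i j) | by case/eqP: (uv j i) | exact: v_inj].
rewrite -cardsT -(card_imset [set: I] f_inj); apply: subset_leq_card.
apply/subsetP => _ /imsetP[i _ ->]; rewrite /f; case: ifP => // uQ.
by have := Q_meets i; rewrite uQ.
Qed.

Definition cart_dist (A B : finType) (dA : A -> A -> nat) (dB : B -> B -> nat)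
  (x y : A * B) : nat := dA x.1 y.1 + dB x.2 y.2.

Lemma graph_dist_cart (A B : finType) (eA : rel A) (eB : rel B) dA dB :
  graph_dist eA dA -> graph_dist eB dB ->
  graph_dist (cart_rel eA eB) (cart_dist dA dB).
Proof.
case=> dA0 dA_step dA_walk [dB0 dB_step dB_walk]; split.
- by move=> x; rewrite /cart_dist dA0 dB0.
- move=> [x1 x2] [y1 y2] [z1 z2]; rewrite /cart_rel /cart_dist /=.
  by case/orP=> /andP[/eqP <- e_yz];
    [have := dA_step x1 _ _ e_yz | have := dB_step x2 _ _ e_yz]; lia.
- move=> [x1 x2] [y1 y2]; rewrite /cart_dist /=.
  have [wA [pA lA] <-] := dA_walk x1 y1; have [wB [pB lB] <-] := dB_walk x2 y2.
  exists ([seq (a, x2) | a <- wA] ++ [seq (y1, b) | b <- wB]); last first.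
    by rewrite size_cat !size_map.
  apply: (@walk_cat _ _ _ (y1, x2)); split; rewrite ?last_map ?lA ?lB //.
  + elim: wA x1 {lA} pA => //= a w IHw x /andP[e_xa pw].
    by rewrite IHw // /cart_rel /= eqxx e_xa.
  + elim: wB x2 {lB} pB => //= b w IHw x /andP[e_xb pw].
    by rewrite IHw // /cart_rel /= eqxx e_xb orbT.
Qed.

Section CycleDist.
Variable n : nat.

Definition cycle_fwd (x y : 'I_n) : nat := if x <= y then y - x else y + n - x.
Definition cycle_dist (x y : 'I_n) : nat := minn (cycle_fwd x y) (cycle_fwd y x).

Lemma val_iter_ordS (x : 'I_n) j : val (iter j (@ordS n) x) = (x + j) %% n.
Proof.
elim: j => [|j IHj]; first by rewrite addn0 modn_small.
by rewrite iterS /= IHj -[_.+1]addn1 modnDml addn1 addnS.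
Qed.

Lemma cycle_fwd_walk (x y : 'I_n) :
  exists2 w, walk (@cycle_rel n) x y w & size w = cycle_fwd x y.
Proof.
exists (traject (@ordS n) (ordS x) (cycle_fwd x y)); last exact: size_traject.
split.
  apply: sub_path (fpath_traject _ _ _) => a b /eqP <-.
  by rewrite /cycle_rel eqxx.
apply: val_inj; rewrite last_traject val_iter_ordS /cycle_fwd.
have := ltn_ord x; have := ltn_ord y; case: ifP => /= [x_le_y|/negbT x_gt_y] *.
  by rewrite subnKC // modn_small.
by rewrite subnKC ?modnDr ?modn_small //; lia.
Qed.

Lemma modn_ordS (y : 'I_n) : y.+1 %% n = if y.+1 == n then 0 else y.+1.
Proof.
case: eqP => [->|y1_neq]; first by rewrite modnn.
by rewrite modn_small //; have := ltn_ord y; lia.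
Qed.

Lemma graph_dist_cycle : graph_dist (@cycle_rel n) cycle_dist.
Proof.
split.
- by move=> x; rewrite /cycle_dist /cycle_fwd leqnn subnn.
- move=> x y z /orP[] /eqP; rewrite modn_ordS /cycle_dist /cycle_fwd /=;
    have := ltn_ord x; have := ltn_ord y; have := ltn_ord z;
    by repeat case: ifP => [/idP ?|/negbT ?]; lia.
- move=> x y; rewrite /cycle_dist; case: leqP => _; first exact: cycle_fwd_walk.
  have [w W <-] := cycle_fwd_walk y x.
  by apply: walk_sym W => a b; rewrite /cycle_rel orbC.
Qed.

Lemma cycle_dist_le_half (x y : 'I_n) : cycle_dist x y <= n %/ 2.
Proof.
rewrite /cycle_dist /cycle_fwd; have := ltn_ord x; have := ltn_ord y.
by repeat case: ifP => [/idP ?|/negbT ?]; lia.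
Qed.

End CycleDist.

Section PathDist.
Variable k : nat.

Definition path_dist (x y : 'I_k) : nat := (x - y) + (y - x).

Lemma path_up_walk j (x y : 'I_k) :
  y = x + j :> nat -> exists2 w, walk (@path_rel k) x y w & size w = j.
Proof.
elim: j x => [|j IHj] x y_eq.
  by exists [::]; split => //; apply: ord_inj; rewrite y_eq addn0.
have x1_lt : x.+1 < k by have := ltn_ord y; lia.
have y_eq' : y = Ordinal x1_lt + j :> nat by rewrite /= addSnnS.
have [w [pw lw] sw] := IHj _ y_eq'.
by exists (Ordinal x1_lt :: w); [split; rewrite //= /path_rel eqxx | rewrite /= sw].
Qed.

Lemma graph_dist_path : graph_dist (@path_rel k) path_dist.
Proof.
split.
- by move=> x; rewrite /path_dist subnn.
- by move=> x y z /orP[] /eqP /=; rewrite /path_dist; lia.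
- move=> x y; wlog x_le_y : x y / x <= y.
    move=> W; case: (leqP x y) => [|/ltnW y_le_x]; first exact: W.
    have [w Wyx] := W y x y_le_x; rewrite /path_dist addnC => <-.
    by apply: walk_sym Wyx => a b; rewrite /path_rel orbC.
  by apply: path_up_walk; rewrite /path_dist; lia.
Qed.

Lemma path_dist_le (x y : 'I_k) : path_dist x y <= k.-1.
Proof. by have := ltn_ord x; have := ltn_ord y; rewrite /path_dist; lia. Qed.

End PathDist.

Section CyclePathPath.
Variables n k m : nat.

Local Notation vertex := (('I_n * 'I_k.+2) * 'I_m.+2)%type.
Local Notation G :=
  (cart_rel (cart_rel (@cycle_rel n) (@path_rel k.+2)) (@path_rel m.+2)).
Local Notation D :=
  (cart_dist (cart_dist (@cycle_dist n) (@path_dist k.+2)) (@path_dist m.+2)).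
Local Notation diam := (n %/ 2 + k.+1 + m.+1).

Lemma graph_dist_cycle_path_path : graph_dist G D.
Proof.
exact: graph_dist_cart (graph_dist_cart (graph_dist_cycle n) (graph_dist_path _))
                       (graph_dist_path _).
Qed.

Lemma cycle_path_path_dist_le (x y : vertex) : D x y <= diam.
Proof.
rewrite /cart_dist; have := cycle_dist_le_half x.1.1 y.1.1.
by have := path_dist_le x.1.2 y.1.2; have := path_dist_le x.2 y.2 => /=; lia.
Qed.

Definition rim (i : 'I_n * bool) : vertex :=
  ((i.1, ord0), if i.2 then ord0 else ord_max).

Lemma rim_inj : injective rim.
Proof. by case=> [a b] [a' b'] [-> ]; case: b b' => [] []. Qed.

Lemma card_rims : #|[set rim i | i : 'I_n * bool]| = 2 * n.
Proof.
by rewrite card_imset ?card_prod ?card_ord ?card_bool 1?mulnC //; exact: rim_inj.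
Qed.

Lemma strong_resolving_rims : strong_resolving G [set rim i | i : 'I_n * bool].
Proof.
move=> p q _; wlog q_le_p : p q / q.1.2 <= p.1.2.
  move=> W; case: (leqP q.1.2 p.1.2) => [|/ltnW]; first exact: W.
  by case/W=> s sQ ?; exists s; last tauto.
exists (rim (q.1.1, q.2 <= p.2)); first exact: imset_f.
right; apply/(on_shortest_pathP graph_dist_cycle_path_path).
have [d0 _ _] := graph_dist_cycle n.
case: p q q_le_p => [[p1 p2] p3] [[q1 q2] q3] /= q_le_p.
rewrite /cart_dist /path_dist /= d0; have := ltn_ord q3.
by case: ifP => /= [|/negbT]; lia.
Qed.

Fact antipode_subproof (a : 'I_n) :
  (if a + n %/ 2 < n then a + n %/ 2 else a + n %/ 2 - n) < n.
Proof. by have := ltn_ord a; case: ifP => [/idP|/negbT]; lia. Qed.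

Definition antipode (a : 'I_n) : 'I_n := Ordinal (antipode_subproof a).

Lemma antipode_inj : injective antipode.
Proof.
move=> a b /(congr1 val) /=; have := ltn_ord a; have := ltn_ord b.
by do 2 case: ifP => [/idP|/negbT] ?; move=> *; apply: ord_inj; lia.
Qed.

Lemma cycle_dist_antipode (a : 'I_n) :
  cycle_dist a (antipode a) = n %/ 2 /\ cycle_dist (antipode a) a = n %/ 2.
Proof.
rewrite /cycle_dist /cycle_fwd /=; have := ltn_ord a.
by case: (ltnP (a + n %/ 2) n) => /= ? ?; repeat case: ifP => [/idP|/negbT] ?; lia.
Qed.

Definition antipodal_rim (i : 'I_n * bool) : vertex :=
  ((antipode i.1, ord_max), if i.2 then ord_max else ord0).

Lemma antipodal_rim_inj : injective antipodal_rim.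
Proof.
move=> [a b] [a' b'] E; have /antipode_inj /= -> := congr1 (fun x => x.1.1) E.
by case: b b' E => [] [] // [].
Qed.

Lemma rim_neq_antipodal_rim i j : rim i != antipodal_rim j.
Proof. by apply/eqP => /(congr1 (fun x => val x.1.2)). Qed.

Lemma dist_rim_antipodal_rim i :
  D (rim i) (antipodal_rim i) = diam /\ D (antipodal_rim i) (rim i) = diam.
Proof.
case: i => a b; have [d_aa' d_a'a] := cycle_dist_antipode a.
by case: b; rewrite /cart_dist /path_dist /= d_aa' d_a'a; split; lia.
Qed.

Lemma strong_resolving_card Q : strong_resolving G Q -> 2 * n <= #|Q|.
Proof.
move=> Q_res.
have <- : #|{: 'I_n * bool}| = 2 * n by rewrite card_prod card_ord card_bool mulnC.
apply: (leq_card_pairs rim_inj antipodal_rim_inj rim_neq_antipodal_rim) => i.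
have [d_uv d_vu] := dist_rim_antipodal_rim i.
apply: (mutually_maximal_in_strong_resolving graph_dist_cycle_path_path Q_res).
- exact: rim_neq_antipodal_rim.
- by move=> s; rewrite d_uv cycle_path_path_dist_le.
- by move=> s; rewrite d_vu cycle_path_path_dist_le.
Qed.

End CyclePathPath.

Theorem theorem3p6 (n k m : nat) :
  3 <= n -> 3 <= k -> 2 <= m ->
  is_sdim (cart_rel (cart_rel (@cycle_rel n) (@path_rel k)) (@path_rel m)) (2 * n).
Proof.
move=> _; case: k => [|[|[|k]]] // _; case: m => [|[|m]] // _.
split; last exact: strong_resolving_card.
by eexists; split; [exact: strong_resolving_rims | exact: card_rims].
Qed.
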